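(* Let $\lambda_1,\dots,\lambda_n$ be ordinals with $\operatorname{cf}(\lambda_i)\neq\omega$ for all $i$, and put $X=\lambda_1\times\cdots\times\lambda_n$ (product of order topologies). For every finite partition $\mathcal A$ of $X$ into clopen sets there are finite subsets $F_i\subseteq\lambda_i$ ($i=1,\dots,n$) such that the grid partition $\mathcal G^X_{\{F_i\}_{i=1}^n}$ is a refinement of $\mathcal A$.
   Context: For an ordinal $\lambda$ and a finite subset $F=\{x_1<\cdots<x_N\}\subseteq\lambda$, the grid partition of $\lambda$ with respect to $F$ is $\mathcal G^\lambda_F=\{[0,x_1]\}\cup\{[x_j+1,x_{j+1}]\mid j=1,\dots,N-1\}\cup\{[x_N+1,\cdot)\}$, where $[\alpha,\beta]=\{x\in\lambda\mid\alpha\leq x\leq\beta\}$ and $[\alpha,\cdot)=\{x\in\lambda\mid\alpha\leq x\}$ (for $F=\emptyset$ it is $\{\lambda\}$). For finite $F_i\subseteq\lambda_i$, the grid partition of $X$ is $\mathcal G^X_{\{F_i\}}=\{\prod_{i=1}^nU_i\mid U_i\in\mathcal G^{\lambda_i}_{F_i}\}$. A family $\mathcal G$ refines $\mathcal A$ if every member of $\mathcal G$ is contained in some member of $\mathcal A$. *)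

From Stdlib Require List.
From mathcomp Require Import all_boot.
Set Implicit Arguments.
Unset Strict Implicit.
Unset Printing Implicit Defensive.

(* An ordinal is represented (up to order isomorphism) by a well-ordered type. *)
Record ordinal_wo := OrdWO {
  wo_carrier :> Type;
  wo_lt : wo_carrier -> wo_carrier -> Prop;
  wo_lt_irrefl : forall x, ~ wo_lt x x;
  wo_lt_trans : forall x y z, wo_lt x y -> wo_lt y z -> wo_lt x z;
  wo_lt_total : forall x y, wo_lt x y \/ x = y \/ wo_lt y x;
  wo_lt_wf : well_founded wo_lt
}.

Definition wo_le (L : ordinal_wo) (x y : L) : Prop := wo_lt x y \/ x = y.

Definition cf_omega (L : ordinal_wo) : Prop :=
  exists s : nat -> L,
    (forall m, wo_lt (s m) (s m.+1)) /\ (forall x : L, exists m, wo_le x (s m)).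

(* Order topology: basic open sets are open intervals (l, u) with
   optional endpoints (None = unbounded). *)
Definition in_interval (L : ordinal_wo) (l u : option L) (x : L) : Prop :=
  (match l with None => True | Some a => wo_lt a x end) /\
  (match u with None => True | Some b => wo_lt x b end).

Definition prodX (n : nat) (L : 'I_n -> ordinal_wo) := forall i : 'I_n, L i.

Definition prod_open (n : nat) (L : 'I_n -> ordinal_wo) (U : prodX L -> Prop) : Prop :=
  forall x, U x -> exists (l u : forall i : 'I_n, option (L i)),
    (forall i, in_interval (l i) (u i) (x i)) /\
    (forall y : prodX L, (forall i, in_interval (l i) (u i) (y i)) -> U y).

Definition prod_closed (n : nat) (L : 'I_n -> ordinal_wo) (U : prodX L -> Prop) : Prop :=
  prod_open (fun x => ~ U x).

Definition prod_clopen (n : nat) (L : 'I_n -> ordinal_wo) (U : prodX L -> Prop) : Prop :=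
  prod_open U /\ prod_closed U.

Definition clopen_partition (n : nat) (L : 'I_n -> ordinal_wo) (k : nat)
    (A : 'I_k -> (prodX L -> Prop)) : Prop :=
  (forall j, prod_clopen (A j)) /\
  (forall j, exists x, A j x) /\
  (forall j j' x, j <> j' -> A j x -> A j' x -> False) /\
  (forall x, exists j, A j x).

(* U is a member of the grid partition G^L_F of L w.r.t. the finite set F
   (given as a list), with F = {x_1 < ... < x_N}:
   [0, x_1], [x_j + 1, x_{j+1}] = {x | x_j < x <= x_{j+1}}, [x_N + 1, .);
   for F empty, the whole of L. *)
Definition grid_block (L : ordinal_wo) (F : list L) (U : L -> Prop) : Prop :=
  (F = nil /\ forall x, U x <-> True) \/
  (exists a, List.In a F /\ (forall c, List.In c F -> wo_le a c) /\
     forall x, U x <-> wo_le x a) \/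
  (exists a b, List.In a F /\ List.In b F /\ wo_lt a b /\
     (forall c, List.In c F -> ~ (wo_lt a c /\ wo_lt c b)) /\
     forall x, U x <-> (wo_lt a x /\ wo_le x b)) \/
  (exists a, List.In a F /\ (forall c, List.In c F -> wo_le c a) /\
     forall x, U x <-> wo_lt a x).

Definition grid_refines (n : nat) (L : 'I_n -> ordinal_wo)
    (F : forall i : 'I_n, list (L i)) (k : nat) (A : 'I_k -> (prodX L -> Prop)) : Prop :=
  forall U : forall i : 'I_n, L i -> Prop,
    (forall i, grid_block (F i) (U i)) ->
    (exists x : prodX L, forall i, U i (x i)) ->
    exists j, forall x : prodX L, (forall i, U i (x i)) -> A j x.

(** Call [c] a jump of the [i]-th coordinate if [c] has an immediate successor
    [c + 1] and moving the [i]-th coordinate of some point from [c] to [c + 1]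
    changes the cell of [A] containing it.  Moving one coordinate across an
    interval free of jumps never changes the cell: successor steps are not
    jumps, and limit steps are absorbed by the open cell of the limit point.
    So the grid of the jump sets refines [A] as soon as these sets are finite.
    Infinitely many jumps in one coordinate would give a strictly increasing
    sequence of jumps [t_m] with witnesses [y_m].  As no [λ_i] has cofinality
    [ω], monotone sequences are bounded, hence converge, so a subsequence of
    the points [y_m[i := t_m]] converges to some [z]; the open cell of [z] then
    contains both [y_m[i := t_m]] and [y_m[i := t_m + 1]] for large [m],
    because [t_m + 1 <= t_(m+1)]. *)

From Stdlib Require Import Classical ClassicalEpsilon ChoiceFacts.
From Stdlib Require Import FunctionalExtensionality.
From mathcomp Require Import all_boot.

Set Implicit Arguments.
Unset Strict Implicit.
Unset Printing Implicit Defensive.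

Lemma dependent_choice (I : Type) (T : I -> Type) (R : forall i, T i -> Prop) :
  (forall i, exists x, R i x) -> exists f : forall i, T i, forall i, R i (f i).
Proof. exact (non_dep_dep_functional_choice choice T R). Qed.

Lemma exists_injective_seq (T : Type) (P : T -> Prop) :
  ~ (exists s : list T, forall x, P x -> List.In x s) ->
  exists t : nat -> T, injective t /\ forall m, P (t m).
Proof.
move=> infinite.
have [next next_spec] : exists next : list T -> T,
    forall s, P (next s) /\ ~ List.In (next s) s.
  apply: (choice (fun s x => P x /\ ~ List.In x s)) => s; apply: NNPP => none.
  apply: infinite; exists s => x Px; apply: NNPP => x_notin.
  by apply: none; exists x.
pose prefix m := iter m (fun s => next s :: s) nil.
have in_prefix p q : p < q -> List.In (next (prefix p)) (prefix q).
  elim: q => // q IH; rewrite ltnS leq_eqVlt => /orP[/eqP->|/IH in_q];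
    [by left | by right].
exists (next \o prefix); split=> [m m' /= eq_t|m]; last exact: (next_spec _).1.
case: (ltngtP m m') => // lt; exfalso.
  by apply: (next_spec (prefix m')).2; rewrite -eq_t; exact: in_prefix.
by apply: (next_spec (prefix m)).2; rewrite eq_t; exact: in_prefix.
Qed.

Section WellOrder.
Variable L : ordinal_wo.
Implicit Types (x y z : L) (l u : option L) (w : nat -> L).

Lemma wo_le_refl x : wo_le x x. Proof. by right. Qed.

Lemma wo_lt_le_trans x y z : wo_lt x y -> wo_le y z -> wo_lt x z.
Proof. by move=> lt_xy [lt_yz|<-] //; exact: wo_lt_trans lt_xy lt_yz. Qed.

Lemma wo_le_lt_trans x y z : wo_le x y -> wo_lt y z -> wo_lt x z.
Proof. by move=> [lt_xy|->] lt_yz //; exact: wo_lt_trans lt_xy lt_yz. Qed.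

Lemma wo_le_trans x y z : wo_le x y -> wo_le y z -> wo_le x z.
Proof. by move=> [lt_xy|->] // le_yz; left; exact: wo_lt_le_trans le_yz. Qed.

Lemma wo_leNlt x y : ~ wo_lt x y -> wo_le y x.
Proof. by move=> nlt_xy; case: (wo_lt_total x y) => [//|[->|]]; [right|left]. Qed.

Lemma wo_le_total x y : wo_le x y \/ wo_le y x.
Proof. by case: (classic (wo_lt x y)) => [lt_xy|/wo_leNlt]; [left; left|right]. Qed.

Lemma wo_le_ltF x y : wo_le x y -> ~ wo_lt y x.
Proof. by move=> le_xy lt_yx; exact: wo_lt_irrefl (wo_le_lt_trans le_xy lt_yx). Qed.

Lemma wo_least (P : L -> Prop) :
  (exists x, P x) -> exists x, P x /\ forall y, P y -> wo_le x y.
Proof.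
move=> [x0 Px0]; apply: NNPP => no_least.
suff: forall x, ~ P x by move/(_ x0).
elim/(well_founded_ind (@wo_lt_wf L)) => x IH Px.
apply: no_least; exists x; split => // y Py; apply: wo_leNlt => lt_yx.
exact: IH lt_yx Py.
Qed.

Definition wo_succ x y := wo_lt x y /\ forall z, ~ (wo_lt x z /\ wo_lt z y).

Lemma wo_succ_le x y z : wo_succ x y -> wo_lt x z -> wo_le y z.
Proof. by move=> [_ gap] lt_xz; apply: wo_leNlt => lt_zy; apply: (gap z). Qed.

Lemma wo_lt_succ x y z : wo_succ x y -> wo_lt z y -> wo_le z x.
Proof. by move=> [_ gap] lt_zy; apply: wo_leNlt => lt_xz; apply: (gap z). Qed.

Lemma in_interval_convex l u x y z :
  in_interval l u x -> in_interval l u z -> wo_le x y -> wo_le y z ->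
  in_interval l u y.
Proof.
case: l u => [a|] [b|] //= [lt_ax _] [_ lt_zb] le_xy le_yz; split=> //;
  by [exact: wo_lt_le_trans lt_ax le_xy | exact: wo_le_lt_trans le_yz lt_zb].
Qed.

Lemma in_interval_limit l u x y :
  ~ (exists z, wo_succ z y) -> in_interval l u y -> wo_lt x y ->
  exists z, [/\ wo_lt x z, wo_lt z y & in_interval l u z].
Proof.
move=> limit_y [ly uy] lt_xy.
have [a [le_xa la lt_ay]] : exists a, [/\ wo_le x a,
    (if l is Some b then wo_le b a else True) & wo_lt a y].
  case: l ly => [b|] /= lt_by; last by exists x; split=> //; exact: wo_le_refl.
  by case: (wo_le_total x b) => le; [exists b | exists x];
    split=> //; exact: wo_le_refl.
have [z [lt_az lt_zy]] : exists z, wo_lt a z /\ wo_lt z y.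
  apply: NNPP => no_z; apply: limit_y; exists a; split=> // z between.
  by apply: no_z; exists z.
exists z; split; [exact: wo_le_lt_trans le_xa lt_az | by [] | split].
- by case: l la {ly} => //= b le_ba; exact: wo_le_lt_trans le_ba lt_az.
- by case: u uy => //= b lt_yb; exact: wo_lt_trans lt_zy lt_yb.
Qed.

Definition converges w z := forall l u, in_interval l u z ->
  exists M, forall m, M <= m -> in_interval l u (w m).

Lemma converges_subseq w z (phi : nat -> nat) :
  {homo phi : m n / m < n} -> converges w z -> converges (w \o phi) z.
Proof.
move=> phi_incr wz l u zlu; have [M wM] := wz l u zlu.
have le_phi m : m <= phi m.
  by elim: m => // m IH; exact: leq_ltn_trans IH (phi_incr _ _ (ltnSn m)).
by exists M => m le_Mm; apply: wM; exact: leq_trans le_Mm (le_phi m).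
Qed.

Lemma exists_tail_min w N :
  exists m, N <= m /\ forall m', N <= m' -> wo_le (w m) (w m').
Proof.
have tail_ne : exists v, exists m, N <= m /\ w m = v by exists (w N), N.
have [_ [[m [le_Nm <-]] least]] := wo_least tail_ne.
by exists m; split=> // m' le_Nm'; apply: least; exists m'.
Qed.

Lemma exists_nondecreasing_subseq w : exists phi : nat -> nat,
  {homo phi : m n / m < n} /\ {homo w \o phi : m n / m <= n >-> wo_le m n}.
Proof.
have [r r_tail_min] := choice _ (exists_tail_min w).
pose phi k := iter k (fun p => r p.+1) (r 0).
have phi_tail_min k : exists N, phi k = r N by case: k => [|k]; eexists.
exists phi; split.
  apply: homo_ltn => [? ? ? /ltn_trans|k]; first exact.
  exact: (r_tail_min _).1.
apply: homo_leq => [?|? ? ? /wo_le_trans|k]; [exact: wo_le_refl|exact|].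
rewrite /=; have [N ->] := phi_tail_min k; apply: (r_tail_min N).2.
exact: leq_trans (r_tail_min N).1 (leq_trans (leqnSn _) (r_tail_min _).1).
Qed.

Lemma exists_increasing_subseq w : injective w -> exists phi : nat -> nat,
  {homo phi : m n / m < n} /\ {homo w \o phi : m n / m < n >-> wo_lt m n}.
Proof.
move=> w_inj; have [phi [phi_incr w_nondecr]] := exists_nondecreasing_subseq w.
exists phi; split=> // m n lt_mn; case: (w_nondecr m n (ltnW lt_mn)) => //= /w_inj eq.
by have := phi_incr _ _ lt_mn; rewrite eq ltnn.
Qed.

Lemma nondecreasing_converges w b :
  {homo w : m n / m <= n >-> wo_le m n} -> (forall m, wo_le (w m) b) ->
  exists z, converges w z.
Proof.
move=> w_nondecr w_le_b.
have [z [w_le_z least]] := @wo_least (fun z => forall m, wo_le (w m) z) (ex_intro _ b w_le_b).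
exists z => l u [lz uz].
have w_u m : in_interval None u (w m).
  by split=> //; case: u uz => //= c; exact: wo_le_lt_trans (w_le_z m).
case: l lz => [a|] /= lt_az; last by exists 0 => m _; exact: w_u.
have [M lt_awM] : exists M, wo_lt a (w M).
  apply: NNPP => no_M; apply: wo_le_ltF lt_az; apply: least => m.
  by apply: wo_leNlt => lt_awm; apply: no_M; exists m.
exists M => m le_Mm; split; last exact: (w_u m).2.
exact: wo_lt_le_trans lt_awM (w_nondecr _ _ le_Mm).
Qed.

Hypothesis L_cf : ~ cf_omega L.

Lemma nondecreasing_bounded w :
  {homo w : m n / m <= n >-> wo_le m n} -> exists b, forall m, wo_le (w m) b.
Proof.
move=> w_nondecr; apply: NNPP => unbounded.
have [g lt_wg] : exists g : L -> nat, forall x, wo_lt x (w (g x)).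
  apply: (choice (fun x m => wo_lt x (w m))) => x; apply: NNPP => no_m.
  by apply: unbounded; exists x => m; apply: wo_leNlt => lt_xwm; apply: no_m; exists m.
pose idx k := iter k (fun p => maxn p.+1 (g (w p))) 0.
have le_idx m : m <= idx m.
  by elim: m => // m IH; rewrite /= leq_max ltnS IH.
apply: L_cf; exists (w \o idx); split => [m|x] /=.
  by apply: wo_lt_le_trans (lt_wg _) (w_nondecr _ _ _); rewrite /= leq_maxr.
by exists (g x); left; apply: wo_lt_le_trans (lt_wg x) (w_nondecr _ _ (le_idx _)).
Qed.

Lemma exists_convergent_subseq w : exists phi : nat -> nat,
  {homo phi : m n / m < n} /\ exists z, converges (w \o phi) z.
Proof.
have [phi [phi_incr w_nondecr]] := exists_nondecreasing_subseq w.
have [b w_le_b] := nondecreasing_bounded w_nondecr.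
by exists phi; split=> //; exact: nondecreasing_converges w_nondecr w_le_b.
Qed.

End WellOrder.

Lemma dfwith_id (I : eqType) (T : I -> Type) (f : forall i, T i) i :
  dfwith f (f i) = f.
Proof. by apply: functional_extensionality_dep => j; case: dfwithP. Qed.

Lemma connect_coordwise n (T : 'I_n -> Type) (P : forall i, T i -> Prop)
    (R : (forall i, T i) -> (forall i, T i) -> Prop) :
  (forall x, R x x) -> (forall x y z, R x y -> R y z -> R x z) ->
  (forall x i (v : T i), P i (x i) -> P i v -> R x (dfwith x v)) ->
  forall x y, (forall i, P i (x i)) -> (forall i, P i (y i)) -> R x y.
Proof.
move=> R_refl R_trans R_step x y Px Py.
pose mix c : forall i, T i := fun i => if i < c then y i else x i.
have mixS c (lt_cn : c < n) : mix c.+1 = dfwith (mix c) (y (Ordinal lt_cn)).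
  apply: functional_extensionality_dep => j; case: dfwithP => [|j' ne_j'].
    by rewrite /mix /= ltnSn.
  rewrite /mix ltnS leq_eqVlt; case: eqP => // eq_j'.
  by case/eqP: ne_j'; apply: val_inj.
have R_mix c : c <= n -> R x (mix c).
  elim: c => [_|c IH lt_cn].
    by have -> : mix 0 = x by apply: functional_extensionality_dep.
  rewrite mixS; apply: R_trans (IH (ltnW lt_cn)) (R_step _ _ _ _ _) => //=.
  by rewrite /mix ltnn.
have -> : y = mix n by apply: functional_extensionality_dep => i; rewrite /mix ltn_ord.
exact: R_mix.
Qed.

Section Product.
Variables (n : nat) (L : 'I_n -> ordinal_wo).

Definition in_box (l u : forall i, option (L i)) (x : prodX L) :=
  forall i, in_interval (l i) (u i) (x i).

Lemma in_box_dfwith l u (x : prodX L) i (v w : L i) :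
  in_box l u (dfwith x v) -> in_interval (l i) (u i) w -> in_box l u (dfwith x w).
Proof.
move=> xv_box w_in j; case: (eqVneq i j) => [<-|ne_ij]; first by rewrite dfwith_in.
by rewrite dfwith_out //; have := xv_box j; rewrite dfwith_out.
Qed.

Lemma coordwise_converges_in_box (P : nat -> prodX L) (z : prodX L) l u :
  (forall i, converges (fun m => P m i) (z i)) -> in_box l u z ->
  exists M, forall m, M <= m -> in_box l u (P m).
Proof.
move=> Pz z_box; have [M PM] := choice _ (fun i => Pz i _ _ (z_box i)).
by exists (\max_i M i) => m le_m i; apply: PM; exact: leq_trans (leq_bigmax i) le_m.
Qed.

Hypothesis L_cf : forall i, ~ cf_omega (L i).

Lemma exists_coordwise_convergent_subseq (P : nat -> prodX L) :
  exists psi : nat -> nat, {homo psi : m n / m < n} /\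
    exists z : prodX L, forall i, converges (fun m => P (psi m) i) (z i).
Proof.
suff [psi [psi_incr Pz]] : exists psi : nat -> nat, {homo psi : m n / m < n} /\
    forall i, exists z : L i, converges (fun m => P (psi m) i) z.
  by exists psi; split=> //; exact: dependent_choice Pz.
suff: forall c, exists psi : nat -> nat, {homo psi : m n / m < n} /\
    forall i : 'I_n, i < c -> exists z : L i, converges (fun m => P (psi m) i) z.
  by case/(_ n) => psi [psi_incr Pz]; exists psi; split=> // i; exact: Pz.
elim=> [|c [psi [psi_incr Pz]]]; first by exists id; split=> [//|i]; rewrite ltn0.
case: (ltnP c n) => [lt_cn|le_nc]; last first.
  by exists psi; split=> // i lt_ic; apply: Pz; exact: leq_trans (ltn_ord i) le_nc.
have [phi [phi_incr [z Pz_c]]] :=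
  exists_convergent_subseq (@L_cf (Ordinal lt_cn)) (fun m => P (psi m) (Ordinal lt_cn)).
exists (psi \o phi); split=> [m m' lt_mm'|i]; first exact/psi_incr/phi_incr.
rewrite ltnS leq_eqVlt => /orP[/eqP eq_ic|lt_ic].
  have -> : i = Ordinal lt_cn by exact: val_inj.
  by exists z.
by have [z' Pz'] := Pz i lt_ic; exists z'; exact: converges_subseq phi_incr Pz'.
Qed.

End Product.

Lemma grid_block_gap (L : ordinal_wo) (F : list L) (U : L -> Prop) s t c :
  grid_block F U -> U s -> U t -> wo_le s c -> wo_lt c t -> ~ List.In c F.
Proof.
case=> [[-> _]|[[a [_ [a_min U_le]]]|
        [[a [b [_ [_ [_ [no_between U_ab]]]]]]|[a [_ [a_max U_gt]]]]]]
  Us Ut le_sc lt_ct Fc //.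
- by apply: wo_le_ltF (a_min c Fc) (wo_lt_le_trans lt_ct ((U_le t).1 Ut)).
- have [lt_as _] := (U_ab s).1 Us; have [_ le_tb] := (U_ab t).1 Ut.
  by apply: (no_between c Fc); split;
    [exact: wo_lt_le_trans lt_as le_sc | exact: wo_lt_le_trans lt_ct le_tb].
- by apply: wo_le_ltF (a_max c Fc) (wo_lt_le_trans ((U_gt s).1 Us) le_sc).
Qed.

Section Cells.
Variables (n : nat) (L : 'I_n -> ordinal_wo) (k : nat) (A : 'I_k -> prodX L -> Prop).
Hypothesis A_open : forall j, prod_open (A j).
Hypothesis A_disjoint : forall j j' x, j <> j' -> A j x -> A j' x -> False.
Hypothesis A_cover : forall x, exists j, A j x.

Definition same_cell (x y : prodX L) := forall j, A j x <-> A j y.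

Lemma same_cell_refl x : same_cell x x. Proof. by []. Qed.

Lemma same_cell_sym x y : same_cell x y -> same_cell y x.
Proof. by move=> xy j; split=> /(xy j). Qed.

Lemma same_cell_trans x y z : same_cell x y -> same_cell y z -> same_cell x z.
Proof. by move=> xy yz j; split=> [/(xy j)/(yz j)|/(yz j)/(xy j)]. Qed.

Lemma same_cell_in j x y : A j x -> A j y -> same_cell x y.
Proof.
move=> Ax Ay j'; case: (eqVneq j' j) => [->|/eqP ne_j'] //.
by split=> Ax'; exfalso; [exact: A_disjoint ne_j' Ax' Ax | exact: A_disjoint ne_j' Ax' Ay].
Qed.

Lemma exists_cell_box x :
  exists l u, in_box l u x /\ forall y, in_box l u y -> same_cell x y.
Proof.
have [j Ax] := A_cover x; have [l [u [x_box box_A]]] := A_open Ax.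
by exists l, u; split=> // y /box_A; exact: same_cell_in.
Qed.

Definition jump i (c : L i) := exists t, wo_succ c t /\
  exists y : prodX L, ~ same_cell (dfwith y c) (dfwith y t).

Lemma same_cell_no_jump i (y : prodX L) (s t : L i) :
  wo_le s t -> (forall c, wo_le s c -> wo_lt c t -> ~ jump c) ->
  same_cell (dfwith y s) (dfwith y t).
Proof.
elim/(well_founded_ind (@wo_lt_wf (L i))): t => t IH [lt_st|<-] no_jump; last first.
  exact: same_cell_refl.
have IH_lt p : wo_le s p -> wo_lt p t -> same_cell (dfwith y s) (dfwith y p).
  move=> le_sp lt_pt; apply: (IH _ lt_pt le_sp) => c le_sc lt_cp.
  exact: no_jump le_sc (wo_lt_trans lt_cp lt_pt).
case: (classic (exists p, wo_succ p t)) => [[p succ_pt]|limit_t].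
  have le_sp := wo_lt_succ succ_pt lt_st.
  apply: same_cell_trans (IH_lt p le_sp succ_pt.1) _.
  apply: NNPP => differ; apply: (no_jump p le_sp succ_pt.1).
  by exists t; split=> //; exists y.
have [l [u [t_box box_cell]]] := exists_cell_box (dfwith y t).
have t_in : in_interval (l i) (u i) t by have := t_box i; rewrite dfwith_in.
have [p [lt_sp lt_pt p_in]] := in_interval_limit limit_t t_in lt_st.
apply: same_cell_trans (IH_lt p (or_introl lt_sp) lt_pt) _.
exact/same_cell_sym/box_cell/(in_box_dfwith t_box p_in).
Qed.

Lemma same_cell_grid_block i (F : list (L i)) (U : L i -> Prop) (y : prodX L) v :
  (forall c, jump c -> List.In c F) -> grid_block F U -> U (y i) -> U v ->
  same_cell y (dfwith y v).
Proof.
move=> jumps_F U_block Uy Uv; rewrite -{1}(dfwith_id y i).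
have no_jump s t : U s -> U t -> forall c, wo_le s c -> wo_lt c t -> ~ jump c.
  by move=> Us Ut c le_sc lt_ct /jumps_F; exact: grid_block_gap U_block Us Ut le_sc lt_ct.
case: (wo_le_total (y i) v) => le; first exact: same_cell_no_jump le (no_jump _ _ Uy Uv).
exact/same_cell_sym/(same_cell_no_jump _ le (no_jump _ _ Uv Uy)).
Qed.

Lemma grid_refines_jumps (F : forall i, list (L i)) :
  (forall i (c : L i), jump c -> List.In c (F i)) -> grid_refines F A.
Proof.
move=> jumps_F U U_block [x0 Ux0]; have [j Ax0] := A_cover x0.
exists j => x Ux.
have x0_x : same_cell x0 x.
  apply: (connect_coordwise (T := L) (P := U) same_cell_refl same_cell_trans) Ux0 Ux.
  move=> y i v Uy Uv; exact: same_cell_grid_block (@jumps_F i) (U_block i) Uy Uv.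
exact: (x0_x j).1.
Qed.

Hypothesis L_cf : forall i, ~ cf_omega (L i).

Lemma jumps_finite i : exists s : list (L i), forall c, jump c -> List.In c s.
Proof.
apply: NNPP => /exists_injective_seq [t0 [t0_inj t0_jump]].
have [phi [phi_incr t_incr]] := exists_increasing_subseq t0_inj.
pose t := t0 \o phi.
have [succ_t succ_t_spec] := choice _ (fun m => t0_jump (phi m)).
have [y y_spec] := choice _ (fun m => (succ_t_spec m).2).
have [psi [psi_incr [z Pz]]] :=
  exists_coordwise_convergent_subseq (@L_cf) (fun m => dfwith (y m) (t m)).
have [l [u [z_box box_cell]]] := exists_cell_box z.
have [M PM] := coordwise_converges_in_box Pz z_box.
set m := psi M.
have m_box : in_box l u (dfwith (y m) (t m)) := PM M (leqnn M).
have t_in p : M <= p -> in_interval (l i) (u i) (t (psi p)).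
  by move=> le_Mp; have := PM p le_Mp i; rewrite dfwith_in.
have succ_in : in_interval (l i) (u i) (succ_t m).
  have succ_m := (succ_t_spec m).1.
  apply: in_interval_convex (t_in M (leqnn M)) (t_in M.+1 (leqnSn M)) (or_introl succ_m.1) _.
  exact: wo_succ_le succ_m (t_incr _ _ (psi_incr _ _ (ltnSn M))).
apply: (y_spec m); apply: same_cell_trans (same_cell_sym (box_cell _ m_box)) (box_cell _ _).
exact: in_box_dfwith m_box succ_in.
Qed.

End Cells.

Theorem theorem5p8 (n : nat) (L : 'I_n -> ordinal_wo)
    (hcf : forall i, ~ cf_omega (L i))
    (k : nat) (A : 'I_k -> (prodX L -> Prop))
    (hA : clopen_partition A) :
  exists F : forall i : 'I_n, list (L i), grid_refines F A.
Proof.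
have [A_clopen [_ [A_disjoint A_cover]]] := hA.
have A_open j := (A_clopen j).1.
have [F jumps_F] := dependent_choice (jumps_finite A_open A_disjoint A_cover hcf).
by exists F; exact: grid_refines_jumps jumps_F.
Qed.
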